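(* Assume $S^t(\mu,\nu)>0$ and let $X$ be $F^t$ conditioned on $F^t_{t+1}=r$. Then $D(X\,\|\,F^t)=D(X\,\|\,B^t)=-\log S^t(\mu,\nu)$.
   Context: $\Omega$ is a finite set, $S$ a symmetric substochastic matrix on $\Omega$ with nonnegative entries, $u,v$ nonnegative vectors on $\Omega$ with $\|u\|_2=\|v\|_2=1$, $\mu=u/\|u\|_1$, $\nu=v/\|v\|_1$, $t$ a positive integer, $S^t(\mu,\nu)=\sum_{x,y}\mu(x)S^t(x,y)\nu(y)$. Let $\Omega_\circ=\Omega\cup\{r\}$, $r\notin\Omega$, fix $z_0\in\Omega$. $F^t$ is the sub-probability measure on $\Omega_\circ^{\{-1,\ldots,t+1\}}$ with $\Pr[F^t=w]=\mu(w_0)\prod_{i=1}^tS(w_{i-1},w_i)\,c(w)$ for $w_{-1}=r$, $w_0,\ldots,w_t\in\Omega$, where $c(w)=\nu(w_t)$ if $w_{t+1}=r$, $c(w)=1-\nu(w_t)$ if $w_{t+1}=z_0$, and 0 otherwise. $B^t$ has $\Pr[B^t=w]=\nu(w_t)\prod_{i=1}^tS(w_i,w_{i-1})\,c'(w)$ for $w_{t+1}=r$, $w_0,\ldots,w_t\in\Omega$, with $c'(w)=\mu(w_0)$ if $w_{-1}=r$, $c'(w)=1-\mu(w_0)$ if $w_{-1}=z_0$, and 0 otherwise. $X$ has $\Pr[X=w]=\Pr[F^t=w]/S^t(\mu,\nu)$ for $w_{t+1}=r$. For nonnegative functions $p,q$ on a countable set, $D(p\|q)=\sum_x p(x)\log\frac{p(x)}{q(x)}$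 (terms with $p(x)=0$ are 0; log base 2); for random variables, $D(X\|Y)$ is the divergence of their distribution functions. *)

From HB Require Import structures.
From mathcomp Require Import all_boot all_order all_algebra.
From mathcomp Require Import all_classical all_reals.
From mathcomp Require Import ereal exp.
Set Implicit Arguments. Unset Strict Implicit. Unset Printing Implicit Defensive.
Import Order.TTheory GRing.Theory Num.Theory.
Local Open Scope ring_scope.

(* Omega is the finite nonempty set 'I_n.+1; Omega_o = option 'I_n.+1 with
   r = None.  A walk w in Omega_o^{-1,...,t+1} is a finite function on
   'I_t.+3, where the ordinal k stands for the paper index k-1. *)
Definition walk (n t : nat) := {ffun 'I_t.+3 -> option 'I_n.+1}.

Section Defs.
Variable R : realType.

Definition log2 (x : R) : R := ln x / ln 2.

Definition l1normalize n (u : 'I_n.+1 -> R) : 'I_n.+1 -> R :=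
  fun x => u x / \sum_y `|u y|.

Definition Spair n (S : 'M[R]_n.+1) (t : nat) (mu nu : 'I_n.+1 -> R) : R :=
  \sum_x \sum_y mu x * (S ^+ t) x y * nu y.

Variables (n t : nat) (S : 'M[R]_n.+1) (mu nu : 'I_n.+1 -> R) (z0 : 'I_n.+1).

(* W w i = w_i for paper index i in {0..t} (default z0, only used when w_i \in Omega) *)
Definition W (w : walk n t) (i : nat) : 'I_n.+1 := odflt z0 (w (inord i.+1)).

Definition inner_in_Omega (w : walk n t) : bool :=
  [forall k : 'I_t.+1, w (inord k.+1) != None].

Definition cF (w : walk n t) : R :=
  match w (inord t.+2) with
  | None => nu (W w t)
  | Some z => if z == z0 then 1 - nu (W w t) else 0
  end.

Definition Fdist (w : walk n t) : R :=
  if (w (inord 0) == None) && inner_in_Omega w then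
    mu (W w 0) * (\prod_(1 <= i < t.+1) S (W w i.-1) (W w i)) * cF w
  else 0.

Definition cB (w : walk n t) : R :=
  match w (inord 0) with
  | None => mu (W w 0)
  | Some z => if z == z0 then 1 - mu (W w 0) else 0
  end.

Definition Bdist (w : walk n t) : R :=
  if (w (inord t.+2) == None) && inner_in_Omega w then
    nu (W w t) * (\prod_(1 <= i < t.+1) S (W w i) (W w i.-1)) * cB w
  else 0.

Definition Xdist (w : walk n t) : R :=
  if w (inord t.+2) == None then Fdist w / Spair S t mu nu else 0.

End Defs.

Definition KL (R : realType) (A : finType) (p q : A -> R) : \bar R :=
  (\sum_(x : A) (if p x == 0%R then 0
                 else if q x == 0%R then +oo
                 else (p x * log2 (p x / q x))%:E))%E.

(* Let a walk be rooted when it starts and ends at r and stays in Omega in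
   between; these are exactly the walks charged by X.  On a rooted walk both
   F^t and B^t equal the path weight mu(w_0) prod_i S(w_{i-1},w_i) nu(w_t)
   (for B^t because S is symmetric), and X is that weight divided by
   S^t(mu,nu).  So log(X/F^t) = log(X/B^t) = -log S^t(mu,nu) wherever X is
   nonzero, and both divergences equal this constant since X sums to 1: the
   path weights of rooted walks add up to S^t(mu,nu) by expanding the matrix
   power. *)

From HB Require Import structures.
From mathcomp Require Import all_boot all_order all_algebra.
From mathcomp Require Import all_classical all_reals.
From mathcomp Require Import exp.
Import Order.TTheory GRing.Theory Num.Theory.
Set Implicit Arguments. Unset Strict Implicit.
Local Open Scope ring_scope.

Lemma log2V (R : realType) (s : R) : 0 < s -> log2 s^-1 = - log2 s.
Proof. by move=> s_gt0; rewrite /log2 lnV ?posrE // mulNr. Qed.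

Lemma KL_proportional (R : realType) (A : finType) (p q : A -> R) (s : R) :
  0 < s -> \sum_x p x = 1 -> (forall x, p x != 0 -> q x = s * p x) ->
  KL p q = (- log2 s)%:E.
Proof.
move=> s_gt0 p_sum1 qE; rewrite /KL.
transitivity (\sum_x (p x * - log2 s)%:E)%E; last first.
  by rewrite -(big_morph _ EFinD (erefl _)) -mulr_suml p_sum1 mul1r.
apply: eq_bigr => x _; have [->|px_neq0] := eqVneq (p x) 0; first by rewrite mul0r.
rewrite qE // mulf_eq0 (negbTE px_neq0) gt_eqF //=.
have -> : p x / (s * p x) = s^-1 by rewrite invfM mulrCA mulfV ?mulr1.
by rewrite log2V.
Qed.

Definition ffun_cons (T : finType) k (x : T) (q : {ffun 'I_k -> T}) :
    {ffun 'I_k.+1 -> T} :=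
  [ffun i => if unlift ord0 i is Some j then q j else x].

Lemma ffun_cons0 (T : finType) k (x : T) (q : {ffun 'I_k -> T}) :
  ffun_cons x q (inord 0) = x.
Proof. by rewrite (_ : inord 0 = ord0) ?ffunE ?unlift_none //; apply/val_inj/inordK. Qed.

Lemma ffun_consS (T : finType) k (x : T) (q : {ffun 'I_k.+1 -> T}) j :
  (j <= k)%N -> ffun_cons x q (inord j.+1) = q (inord j).
Proof.
move=> le_jk; rewrite (_ : inord j.+1 = lift ord0 (inord j)) ?ffunE ?liftK //.
by apply/val_inj; rewrite /= /bump /= !inordK.
Qed.

Lemma big_ffun_cons (V : nmodType) (T : finType) k (F : {ffun 'I_k.+1 -> T} -> V) :
  \sum_p F p = \sum_x \sum_(q : {ffun 'I_k -> T}) F (ffun_cons x q).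
Proof.
rewrite pair_big (reindex (fun xq => ffun_cons xq.1 xq.2)) //=.
exists (fun p => (p ord0, [ffun j => p (lift ord0 j)])) => [[x q] _ | p _].
  by congr pair; [rewrite ffunE unlift_none | apply/ffunP => j; rewrite !ffunE liftK].
by apply/ffunP => i; rewrite ffunE; case: unliftP => [j|] ->; rewrite ?ffunE.
Qed.

Lemma sum_path_weights (R : pzRingType) n k (S : 'M[R]_n.+1) (g h : 'I_n.+1 -> R) :
  \sum_(p : {ffun 'I_k.+1 -> 'I_n.+1}) g (p (inord 0)) *
     (\prod_(1 <= i < k.+1) S (p (inord i.-1)) (p (inord i))) * h (p (inord k))
  = \sum_x \sum_y g x * (S ^+ k) x y * h y.
Proof.
elim: k g => [|k IHk] g; rewrite big_ffun_cons; apply: eq_bigr => x _.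
  rewrite [RHS](bigD1 x) //= [X in _ + X]big1 ?addr0 => [|y /negbTE]; last first.
    by rewrite mxE eq_sym => ->; rewrite mulr0 mul0r.
  rewrite expr0 mxE eqxx mulr1 (big_pred1 [ffun=> x]) => [|q]; last first.
    by apply/esym/eqP/ffunP => -[].
  by rewrite big_geq // mulr1 !ffun_cons0.
transitivity (g x * \sum_(q : {ffun 'I_k.+1 -> 'I_n.+1}) S x (q (inord 0)) *
     (\prod_(1 <= i < k.+1) S (q (inord i.-1)) (q (inord i))) * h (q (inord k))).
  rewrite mulr_sumr; apply: eq_bigr => q _.
  rewrite big_nat_recl // ffun_cons0 !ffun_consS // !mulrA; congr (_ * _ * _).
  apply: eq_big_nat => -[|i] // /andP[_ lt_ik].
  by rewrite !ffun_consS // ltnW.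
rewrite IHk mulr_sumr; under eq_bigr => z _ do rewrite mulr_sumr.
rewrite exchange_big /=; apply: eq_bigr => y _.
rewrite exprS -mulmxE mxE big_distrr big_distrl /=.
by apply: eq_bigr => z _; rewrite !mulrA.
Qed.

Section RootedWalks.
Variables (R : realType) (n t : nat) (S : 'M[R]_n.+1) (mu nu : 'I_n.+1 -> R)
  (z0 : 'I_n.+1).

Local Notation St := (Spair S t mu nu).
Local Notation Xt := (@Xdist R n t S mu nu z0).
Local Notation Ft := (@Fdist R n t S mu nu z0).
Local Notation Bt := (@Bdist R n t S mu nu z0).

Definition rooted_walk (w : walk n t) : bool :=
  [&& w (inord 0) == None, inner_in_Omega w & w (inord t.+2) == None].

Definition walk_of_path (p : {ffun 'I_t.+1 -> 'I_n.+1}) : walk n t :=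
  [ffun k : 'I_t.+3 => if (0 < k < t.+2)%N then Some (p (inord k.-1)) else None].

Definition path_of_walk (w : walk n t) : {ffun 'I_t.+1 -> 'I_n.+1} :=
  [ffun i : 'I_t.+1 => W z0 w i].

Definition walk_weight (w : walk n t) : R :=
  mu (W z0 w 0) * (\prod_(1 <= i < t.+1) S (W z0 w i.-1) (W z0 w i)) * nu (W z0 w t).

Lemma W_walk_of_path p i : (i <= t)%N -> W z0 (walk_of_path p) i = p (inord i).
Proof. by move=> le_it; rewrite /W ffunE inordK ?ltnS ?le_it // ltnW. Qed.

Lemma rooted_walk_of_path p : rooted_walk (walk_of_path p).
Proof.
rewrite /rooted_walk !ffunE !inordK //= ltnn andbT.
apply/forallP => k; have lt_kt := ltn_ord k.
have lt_k1 : (k.+1 < t.+3)%N by rewrite !ltnS ltnW.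
by rewrite ffunE (inordK lt_k1) /= ltnS lt_kt.
Qed.

Lemma walk_of_pathK : cancel walk_of_path path_of_walk.
Proof.
move=> p; apply/ffunP => i.
by rewrite ffunE W_walk_of_path ?inord_val // -ltnS.
Qed.

Lemma path_of_walkK w : rooted_walk w -> walk_of_path (path_of_walk w) = w.
Proof.
case/and3P => /eqP w0 /forallP w_inner /eqP wt; apply/ffunP => k; rewrite ffunE.
case: ifPn => [/andP[k_gt0 k_lt]|].
  have lt_k1t : (k.-1 < t.+1)%N by rewrite prednK.
  have inord_k : inord k.-1.+1 = k by rewrite prednK // inord_val.
  have := w_inner (inord k.-1).
  by rewrite ffunE /W !inordK // inord_k; case: (w k).
rewrite negb_and -!leqNgt leqn0 => /orP[/eqP k0 | k_ge].
  by rewrite -w0; congr (w _); apply/val_inj; rewrite /= inordK // k0.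
have -> : k = inord t.+2.
  by apply/val_inj/eqP; rewrite /= inordK // eqn_leq k_ge andbT -ltnS.
by rewrite wt.
Qed.

Lemma sum_rooted_walk_weight :
  \sum_(w | rooted_walk w) walk_weight w = St.
Proof.
rewrite (reindex_onto walk_of_path path_of_walk path_of_walkK) /=.
rewrite (eq_bigl xpredT) => [|p]; last first.
  by rewrite rooted_walk_of_path walk_of_pathK eqxx.
rewrite /Spair -sum_path_weights; apply: eq_bigr => p _.
rewrite /walk_weight !W_walk_of_path //; congr (_ * _ * _).
apply: eq_big_nat => i /andP[_ lt_it].
by rewrite !W_walk_of_path // (leq_trans (leq_pred _)).
Qed.

Lemma XdistE w :
  Xt w = (if rooted_walk w then walk_weight w else 0) / St.
Proof.
rewrite /Xdist /Fdist /rooted_walk /cF; case: (w (inord t.+2)) => [z|] /=.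
  by rewrite !andbF mul0r.
by rewrite andbT; case: ifP; rewrite ?mul0r.
Qed.

Lemma Fdist_rooted w : rooted_walk w -> Ft w = walk_weight w.
Proof. by case/and3P => w0 w_inner /eqP wt; rewrite /Fdist /cF w0 w_inner wt. Qed.

Lemma Bdist_rooted w : S^T = S -> rooted_walk w -> Bt w = walk_weight w.
Proof.
move=> S_sym /and3P[/eqP w0 w_inner wt].
rewrite /Bdist /cB /walk_weight wt w_inner w0 /= mulrC -mulrA [nu _ * _]mulrC.
congr (_ * (_ * _)); apply: eq_bigr => i _.
by rewrite -[in RHS]S_sym mxE.
Qed.

Lemma sum_Xdist : St != 0 -> \sum_w Xt w = 1.
Proof.
move=> Spair_neq0; under eq_bigr do rewrite XdistE.
by rewrite -mulr_suml -big_mkcond sum_rooted_walk_weight divff.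
Qed.

Lemma Xdist_proportional (q : walk n t -> R) :
    St != 0 -> (forall w, rooted_walk w -> q w = walk_weight w) ->
  forall w, Xt w != 0 -> q w = St * Xt w.
Proof.
move=> Spair_neq0 qE w; rewrite XdistE.
case: ifP => [rooted_w _ | _]; last by rewrite mul0r eqxx.
by rewrite qE // mulrC divfK.
Qed.

End RootedWalks.

Theorem lemma3p3 (R : realType) (n t : nat) (S : 'M[R]_n.+1)
    (u v : 'I_n.+1 -> R) (z0 : 'I_n.+1) :
  (0 < t)%N ->
  S^T = S ->
  (forall x y, 0 <= S x y) ->
  (forall x, \sum_y S x y <= 1) ->
  (forall x, 0 <= u x) -> (forall x, 0 <= v x) ->
  Num.sqrt (\sum_x u x ^+ 2) = 1 -> Num.sqrt (\sum_x v x ^+ 2) = 1 ->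
  let mu := l1normalize u in
  let nu := l1normalize v in
  0 < Spair S t mu nu ->
  KL (@Xdist R n t S mu nu z0) (@Fdist R n t S mu nu z0) = (- log2 (Spair S t mu nu))%:E /\
  KL (@Xdist R n t S mu nu z0) (@Bdist R n t S mu nu z0) = (- log2 (Spair S t mu nu))%:E.
Proof.
move=> _ S_sym _ _ _ _ _ _ mu nu Spair_gt0; have Spair_neq0 := lt0r_neq0 Spair_gt0.
have X_sum1 : \sum_(w : walk n t) Xdist S mu nu z0 w = 1 by exact: sum_Xdist.
split; apply: (KL_proportional Spair_gt0 X_sum1); apply: Xdist_proportional => // w.
- exact: Fdist_rooted.
- exact: Bdist_rooted.
Qed.
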